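(* Let $T_{26}=\mathbf{e}^1_1\otimes(\mathbf{e}^2_1\otimes\mathbf{e}^3_1+\mathbf{e}^2_2\otimes\mathbf{e}^3_3+\mathbf{e}^2_3\otimes\mathbf{e}^3_5)+\mathbf{e}^1_2\otimes(\mathbf{e}^2_1\otimes\mathbf{e}^3_2+\mathbf{e}^2_2\otimes\mathbf{e}^3_4+\mathbf{e}^2_3\otimes\mathbf{e}^3_6)\in\mathbb{C}^2\otimes\mathbb{C}^3\otimes\mathbb{C}^6$ and $g(\mathbf{x},\mathbf{y},\mathbf{z})=x_1y_1z_1+x_2y_1z_2+x_1y_2z_3+x_2y_2z_4+x_1y_3z_5+x_2y_3z_6$. Let $T\in\mathbb{C}^2\otimes\mathbb{C}^3\otimes\mathbb{C}^6$ and $(A,B,C)\in\mathrm{GL}_2\times\mathrm{GL}_3\times\mathrm{GL}_6$ with $(A,B,C)\cdot T=T_{26}$. Then a rank-one tensor $\mathbf{a}\otimes\mathbf{b}\otimes\mathbf{c}$ lies in the forbidden locus of $T$ if and only if $g(A\mathbf{a},B\mathbf{b},C\mathbf{c})=0$ (equivalently $\langle (A^T\otimes B^T\otimes C^T)\cdot T_{26}^*,\mathbf{a}\otimes\mathbf{b}\otimes\mathbf{c}\rangle=0$, where $T_{26}^*$ is $T_{26}$ written in the dual basis).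
   Context: $\mathbf{e}^i_j$ is the $j$-th standard basis vector of the $i$-th factor. The group acts by $(A,B,C)\cdot(\mathbf{a}\otimes\mathbf{b}\otimes\mathbf{c})=A\mathbf{a}\otimes B\mathbf{b}\otimes C\mathbf{c}$, extended linearly. The rank of a tensor is the minimal number of rank-one tensors summing to it; $P$ is in the forbidden locus of $T$ if $\mathrm{rk}(T-\lambda P)\ge\mathrm{rk}(T)$ for all $\lambda\in\mathbb{C}$. (Here $\mathrm{rk}(T)=6$.) *)

(* The complex numbers are modelled as R[i] := complex R
   (mathcomp-real-closed) for an arbitrary R : realType (MathComp-Analysis),
   i.e. the genuine field C (every realType is a complete ordered field). *)
From HB Require Import structures.
From mathcomp Require Import all_boot all_order all_algebra.
From mathcomp Require Import boolp reals.
From mathcomp Require Export complex.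
Set Implicit Arguments. Unset Strict Implicit. Unset Printing Implicit Defensive.
Import Order.TTheory GRing.Theory Num.Theory.
Local Open Scope ring_scope.

Notation tensor K n1 n2 n3 := {ffun 'I_n1 * 'I_n2 * 'I_n3 -> K}.

Section Tensors.
Variable K : fieldType.


Definition outer n1 n2 n3 (a : 'cV[K]_n1) (b : 'cV[K]_n2) (c : 'cV[K]_n3)
  : tensor K n1 n2 n3 := [ffun x => a x.1.1 0 * b x.1.2 0 * c x.2 0].

Definition rank_le n1 n2 n3 (T : tensor K n1 n2 n3) (r : nat) : Prop :=
  exists (a : 'I_r -> 'cV[K]_n1) (b : 'I_r -> 'cV[K]_n2) (c : 'I_r -> 'cV[K]_n3),
    T = \sum_(l < r) outer (a l) (b l) (c l).

Lemma rank_exists n1 n2 n3 (T : tensor K n1 n2 n3) : exists r, rank_le T r.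
Proof.
pose F (x : 'I_n1 * 'I_n2 * 'I_n3) :=
  outer (T x *: delta_mx x.1.1 0) (delta_mx x.1.2 0) (delta_mx x.2 0).
have HT : T = \sum_x F x.
  apply/ffunP => y; rewrite sum_ffunE (bigD1 y) //= big1 ?addr0.
    rewrite /F ffunE !mxE !eqxx /= !mulr1; by case: y.
  move=> x /negPf nxy; rewrite /F ffunE !mxE /=.
  case: x y nxy => [[i j] k] [[i' j'] k'] /= nxy.
  have [ei|ni] := eqVneq i i'; last by rewrite !mulr0 !mul0r.
  have [ej|nj] := eqVneq j j'; last by rewrite !mulr0 !mul0r.
  have [ek|nk] := eqVneq k k'; last by rewrite !mulr0.
  by subst; rewrite eqxx in nxy.
exists #|{: 'I_n1 * 'I_n2 * 'I_n3}|.
exists (fun l => T (enum_val l) *: delta_mx (enum_val l).1.1 0).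
exists (fun l => delta_mx (enum_val l).1.2 0).
exists (fun l => delta_mx (enum_val l).2 0).
rewrite {1}HT (reindex (@enum_val _ (pred_of_simpl predT))) //=.
by exists (fun x => enum_rank x) => x _; rewrite ?enum_valK ?enum_rankK.
Qed.


Lemma rank_existsb n1 n2 n3 (T : tensor K n1 n2 n3) :
  exists r, `[< rank_le T r >].
Proof. by have [r Hr] := rank_exists T; exists r; apply/asboolP. Qed.

Definition trank n1 n2 n3 (T : tensor K n1 n2 n3) : nat := ex_minn (rank_existsb T).

Definition forbidden n1 n2 n3 (T P : tensor K n1 n2 n3) : Prop :=
  forall lam : K, (trank T <= trank [ffun x => (T x - lam * P x)%R])%N.

(* action of (A,B,C) : (A,B,C).(a (x) b (x) c) = Aa (x) Bb (x) Cc, extended linearly *)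
Definition act n1 n2 n3 (A : 'M[K]_n1) (B : 'M[K]_n2) (C : 'M[K]_n3)
  (T : tensor K n1 n2 n3) : tensor K n1 n2 n3 :=
  [ffun x => \sum_(i < n1) \sum_(j < n2) \sum_(k < n3)
               A x.1.1 i * B x.1.2 j * C x.2 k * T (i, j, k)].

(* standard basis vector e_i of K^n, 1-based index as in the paper *)
Definition ev n (i : nat) : 'cV[K]_n := \col_(j < n) ((j.+1 == i)%:R).

(* i-th coordinate (1-based) of a vector *)
Definition coord1 n (v : 'cV[K]_n.+1) (i : nat) : K := v (inord i.-1) 0.

Definition T26 : tensor K 2 3 6 :=
  outer (ev 2 1) (ev 3 1) (ev 6 1) + outer (ev 2 1) (ev 3 2) (ev 6 3)
  + outer (ev 2 1) (ev 3 3) (ev 6 5)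
  + outer (ev 2 2) (ev 3 1) (ev 6 2) + outer (ev 2 2) (ev 3 2) (ev 6 4)
  + outer (ev 2 2) (ev 3 3) (ev 6 6).

Definition g26 (x : 'cV[K]_2) (y : 'cV[K]_3) (z : 'cV[K]_6) : K :=
  let x_ := coord1 x in let y_ := coord1 y in let z_ := coord1 z in
  x_ 1 * y_ 1 * z_ 1 + x_ 2 * y_ 1 * z_ 2 + x_ 1 * y_ 2 * z_ 3
  + x_ 2 * y_ 2 * z_ 4 + x_ 1 * y_ 3 * z_ 5 + x_ 2 * y_ 3 * z_ 6.
End Tensors.

(* Acting by (A, B, C) preserves tensor rank, so it suffices to treat T26 and
   a (x) b (x) c directly.  Flattening along the third factor sends T26 to an
   invertible 6 x 6 matrix M and T26 - lam a (x) b (x) c to M - lam c v^T with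
   v = a (x) b; the rank of a flattening bounds the tensor rank from below, so
   rk T26 = 6.  If g(a, b, c) = 0 every M - lam c v^T is invertible, hence
   a (x) b (x) c is forbidden.  Otherwise, for lam = 1/g, the rows of the
   flattening lie in a hyperplane of K^2 (x) K^3; every hyperplane of a tensor
   product of two spaces is spanned by rank-one tensors, which yields a
   decomposition of length 5. *)

From HB Require Import structures.
From mathcomp Require Import all_boot all_order all_algebra.
From mathcomp Require Import boolp reals complex.
From mathcomp Require Import ring zify.
Import Order.TTheory GRing.Theory Num.Theory.
Local Open Scope ring_scope.
Set Implicit Arguments. Unset Strict Implicit. Unset Printing Implicit Defensive.

Lemma sum_mxvec_index (R : nmodType) m n (F : 'I_(m * n) -> R) :
  \sum_k F k = \sum_i \sum_j F (mxvec_index i j).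
Proof.
by rewrite pair_big (reindex _ (curry_mxvec_bij m n)); apply: eq_bigr => -[i j].
Qed.

Lemma eq_mxvec_index m n (i i' : 'I_m) (j j' : 'I_n) :
  (mxvec_index i j == mxvec_index i' j') = ((i, j) == (i', j')).
Proof. by rewrite /mxvec_index (inj_eq (@cast_ord_inj _ _ _)) (inj_eq enum_rank_inj). Qed.

Section TensorRank.
Variable K : fieldType.

Section Action.
Variables (n1 n2 n3 : nat) (A : 'M[K]_n1) (B : 'M[K]_n2) (C : 'M[K]_n3).

Lemma act_subZ (lam : K) (X Y : tensor K n1 n2 n3) :
  act A B C [ffun x => X x - lam * Y x]
  = [ffun x => act A B C X x - lam * act A B C Y x].
Proof.
apply/ffunP => x; rewrite !ffunE big_distrr -sumrB; apply: eq_bigr => i _ /=.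
rewrite big_distrr -sumrB; apply: eq_bigr => j _ /=.
by rewrite big_distrr -sumrB; apply: eq_bigr => k _ /=; rewrite ffunE; ring.
Qed.

Lemma act_is_zmod_morphism : zmod_morphism (act A B C).
Proof.
move=> X Y; have -> : X - Y = [ffun x => X x - 1 * Y x].
  by apply/ffunP => x; rewrite !ffunE mul1r.
by rewrite act_subZ; apply/ffunP => x; rewrite !ffunE mul1r.
Qed.

HB.instance Definition _ :=
  GRing.isZmodMorphism.Build (tensor K n1 n2 n3) (tensor K n1 n2 n3) (act A B C)
    act_is_zmod_morphism.

Lemma act_outer a b c : act A B C (outer a b c) = outer (A *m a) (B *m b) (C *m c).
Proof.
apply/ffunP => x; rewrite !ffunE !mxE -mulrA big_distrl /=; apply: eq_bigr => i _.
rewrite big_distrl /= big_distrr /=; apply: eq_bigr => j _.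
by rewrite !big_distrr /=; apply: eq_bigr => k _; rewrite ffunE /=; ring.
Qed.

End Action.

Lemma tensor_sum_outer n1 n2 n3 (X : tensor K n1 n2 n3) :
  X = \sum_x outer (X x *: delta_mx x.1.1 0) (delta_mx x.1.2 0) (delta_mx x.2 0).
Proof.
apply/ffunP => y; rewrite sum_ffunE (bigD1 y) //= big1 ?addr0.
  by rewrite !ffunE !mxE !eqxx /= !mulr1; case: y.
move=> x /negPf nxy; rewrite !ffunE !mxE /=.
case: x y nxy => [[i j] k] [[i' j'] k'] /= nxy.
have [ei|_] := eqVneq i i'; last by rewrite !mulr0 !mul0r.
have [ej|_] := eqVneq j j'; last by rewrite !mulr0 !mul0r.
have [ek|_] := eqVneq k k'; last by rewrite !mulr0.
by subst; rewrite eqxx in nxy.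
Qed.

Lemma act_comp n1 n2 n3 (A A' : 'M[K]_n1) (B B' : 'M[K]_n2) (C C' : 'M[K]_n3) X :
  act A' B' C' (act A B C X) = act (A' *m A) (B' *m B) (C' *m C) X.
Proof.
rewrite (tensor_sum_outer X) !raddf_sum; apply: eq_bigr => x _ /=.
by rewrite !act_outer !mulmxA.
Qed.

Lemma act1 n1 n2 n3 (X : tensor K n1 n2 n3) : act 1%:M 1%:M 1%:M X = X.
Proof.
rewrite {1}(tensor_sum_outer X) raddf_sum [RHS]tensor_sum_outer.
by apply: eq_bigr => x _ /=; rewrite act_outer !mul1mx.
Qed.

Lemma rank_le_act n1 n2 n3 (A : 'M[K]_n1) (B : 'M[K]_n2) (C : 'M[K]_n3) X r :
  rank_le X r -> rank_le (act A B C X) r.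
Proof.
case=> a [b [c ->]]; exists (fun l => A *m a l), (fun l => B *m b l), (fun l => C *m c l).
by rewrite raddf_sum; apply: eq_bigr => l _ /=; rewrite act_outer.
Qed.

Lemma rank_leW n1 n2 n3 (X : tensor K n1 n2 n3) r s :
  rank_le X r -> (r <= s)%N -> rank_le X s.
Proof.
case=> a [b [c ->]] rs.
exists (fun l : 'I_s => oapp a 0 (insub (val l))),
       (fun l : 'I_s => oapp b 0 (insub (val l))),
       (fun l : 'I_s => oapp c 0 (insub (val l))).
pose G (i : nat) := oapp (fun l => outer (a l) (b l) (c l)) 0 (insub i).
transitivity (\sum_(l < r) G l); first by apply: eq_bigr => l _; rewrite /G valK.
rewrite (big_ord_widen _ G rs) big_mkcond /=; apply: eq_bigr => l _; rewrite /G.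
case: insubP => [u -> //|/negPf ->].
by apply/ffunP => x; rewrite !ffunE !mxE !mul0r.
Qed.

Lemma trank_min n1 n2 n3 (X : tensor K n1 n2 n3) r : rank_le X r -> (trank X <= r)%N.
Proof. by rewrite /trank; case: ex_minnP => m _ min_m Xr; apply/min_m/asboolP. Qed.

Lemma rank_le_trank n1 n2 n3 (X : tensor K n1 n2 n3) : rank_le X (trank X).
Proof. by rewrite /trank; case: ex_minnP => m /asboolP. Qed.

Lemma trank_act n1 n2 n3 (A : 'M[K]_n1) (B : 'M[K]_n2) (C : 'M[K]_n3) X :
  A \in unitmx -> B \in unitmx -> C \in unitmx -> trank (act A B C X) = trank X.
Proof.
move=> uA uB uC; apply/eqP; rewrite eqn_leq; apply/andP; split; apply: trank_min.
  exact: rank_le_act (rank_le_trank _).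
have {1}-> : X = act (invmx A) (invmx B) (invmx C) (act A B C X).
  by rewrite act_comp !mulVmx // act1.
exact: rank_le_act (rank_le_trank _).
Qed.

Lemma forbidden_act n1 n2 n3 (A : 'M[K]_n1) (B : 'M[K]_n2) (C : 'M[K]_n3) T P :
  A \in unitmx -> B \in unitmx -> C \in unitmx ->
  forbidden (act A B C T) (act A B C P) <-> forbidden T P.
Proof.
move=> uA uB uC; rewrite /forbidden.
by split=> forb lam; move: (forb lam); rewrite -act_subZ !trank_act.
Qed.

Section Flattening.
Variables n1 n2 n3 : nat.
Implicit Types (X Y : tensor K n1 n2 n3) (p : 'cV[K]_n1) (q : 'cV[K]_n2).

Definition flat X : 'M[K]_(n3, n1 * n2) :=
  \matrix_k mxvec (\matrix_(i, j) X (i, j, k)).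

Definition vec_outer p q : 'rV[K]_(n1 * n2) := mxvec (p *m q^T).

Lemma flatE X i j k : flat X k (mxvec_index i j) = X (i, j, k).
Proof. by rewrite mxE mxvecE mxE. Qed.

Lemma vec_outerE p q i j : vec_outer p q 0 (mxvec_index i j) = p i 0 * q j 0.
Proof. by rewrite mxvecE mxE big_ord1 mxE. Qed.

Lemma vec_outer_delta i j :
  vec_outer (delta_mx i 0) (delta_mx j 0) = delta_mx 0 (mxvec_index i j).
Proof. by rewrite /vec_outer trmx_delta mul_delta_mx mxvec_delta. Qed.

Lemma flat_outer p q (z : 'cV[K]_n3) : flat (outer p q z) = z *m vec_outer p q.
Proof.
apply/matrixP => k; case/mxvec_indexP => i j.
by rewrite flatE mxE big_ord1 vec_outerE ffunE /=; ring.
Qed.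

Lemma flat_subZ X Y (lam : K) :
  flat [ffun x => X x - lam * Y x] = flat X - lam *: flat Y.
Proof.
by apply/matrixP => k; case/mxvec_indexP => i j; rewrite !mxE !mxvecE !mxE ffunE.
Qed.

Lemma rank_flat_le X r : rank_le X r -> (\rank (flat X) <= r)%N.
Proof.
case=> a [b [c ->]].
have -> : flat (\sum_(l < r) outer (a l) (b l) (c l))
    = (\matrix_(k, l) c l k 0) *m \matrix_l vec_outer (a l) (b l).
  apply/matrixP => k; case/mxvec_indexP => i j; rewrite flatE !mxE sum_ffunE.
  by apply: eq_bigr => l _; rewrite !mxE vec_outerE ffunE /=; ring.
exact: leq_trans (mxrankM_maxl _ _) (rank_leq_col _).
Qed.

Lemma rank_flat_le_trank X : (\rank (flat X) <= trank X)%N.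
Proof. exact/rank_flat_le/rank_le_trank. Qed.

Lemma trank_ge_row_free X : row_free (flat X) -> (n3 <= trank X)%N.
Proof. by move=> /eqP rk; apply: leq_trans (rank_flat_le_trank X); rewrite rk. Qed.

Definition rank_one_rows (I : finType) (p : I -> 'cV[K]_n1) (q : I -> 'cV[K]_n2)
  : 'M[K]_(#|I|, n1 * n2) := \matrix_l vec_outer (p (enum_val l)) (q (enum_val l)).

Lemma vec_outer_sub_rows (I : finType) (p : I -> 'cV[K]_n1) (q : I -> 'cV[K]_n2) l :
  (vec_outer (p l) (q l) <= rank_one_rows p q)%MS.
Proof. by apply/(eq_row_sub (enum_rank l)); rewrite rowK enum_rankK. Qed.

(* A basis of the row space chosen among the rank-one rows gives the
   decomposition; its coefficients are the columns of [flat X *m pinvmx G]. *)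
Lemma rank_le_flat_sub (I : finType) (p : I -> 'cV[K]_n1) (q : I -> 'cV[K]_n2) X :
  (flat X <= rank_one_rows p q)%MS -> rank_le X (\rank (rank_one_rows p q)).
Proof.
set F := rank_one_rows p q => sXF.
pose f := maxrankfun F; pose G := rowsub f F.
have sXG : (flat X <= G)%MS by rewrite (submx_trans sXF) // eq_maxrowsub.
pose Y := flat X *m pinvmx G.
exists (fun l => p (enum_val (f l))), (fun l => q (enum_val (f l))), (fun l => col l Y).
apply/ffunP => [[[i j] k]]; rewrite sum_ffunE -flatE -(mulmxKpV sXG) mxE.
by apply: eq_bigr => l _; rewrite ffunE !mxE vec_outerE /=; ring.
Qed.

Lemma row_full_vec_outer m (M : 'M[K]_(m, n1 * n2)) :
  (forall i j, (vec_outer (delta_mx i 0) (delta_mx j 0) <= M)%MS) -> row_full M.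
Proof.
move=> sM; rewrite -sub1mx; apply/row_subP; case/mxvec_indexP => i j.
by rewrite row1 -vec_outer_delta.
Qed.

Lemma rank_le_dim X : rank_le X (n1 * n2).
Proof.
pose p (x : 'I_n1 * 'I_n2) : 'cV[K]_n1 := delta_mx x.1 0.
pose q (x : 'I_n1 * 'I_n2) : 'cV[K]_n2 := delta_mx x.2 0.
apply: rank_leW (rank_leq_col (rank_one_rows p q)).
apply/rank_le_flat_sub/submx_full/row_full_vec_outer => i j.
exact: (vec_outer_sub_rows p q (i, j)).
Qed.

End Flattening.

Lemma mxrank_le_pred_of_mul0 m n (M : 'M[K]_(m, n)) (c : 'cV[K]_n) :
  c != 0 -> M *m c = 0 -> (\rank M <= n.-1)%N.
Proof.
move=> c0 Mc0; have := rank_leq_col M; rewrite leq_eqVlt => /orP[/eqP rkM|]; last first.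
  by case: n c M c0 Mc0 => [c|n c] M; rewrite ?thinmx0 ?eqxx.
have /row_fullP[D DM] : row_full M by rewrite /row_full rkM.
by rewrite -[c]mul1mx -DM -mulmxA Mc0 mulmx0 eqxx in c0.
Qed.

Section Hyperplane.
Variables (n1 n2 : nat) (c : 'cV[K]_(n1 * n2)).
Implicit Types (p : 'cV[K]_n1) (q : 'cV[K]_n2).

Definition bil p q : K := (vec_outer p q *m c) 0 0.

Lemma bilDl p1 p2 q : bil (p1 + p2) q = bil p1 q + bil p2 q.
Proof. by rewrite /bil /vec_outer mulmxDl linearD mulmxDl mxE. Qed.

Lemma bilZl s p q : bil (s *: p) q = s * bil p q.
Proof. by rewrite /bil /vec_outer -scalemxAl linearZ -scalemxAl mxE. Qed.

Lemma bilDr p q1 q2 : bil p (q1 + q2) = bil p q1 + bil p q2.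
Proof. by rewrite /bil /vec_outer linearD mulmxDr linearD mulmxDl mxE. Qed.

Lemma bilZr s p q : bil p (s *: q) = s * bil p q.
Proof. by rewrite /bil /vec_outer linearZ -scalemxAr linearZ -scalemxAl mxE. Qed.

Lemma bil_neq0 : c != 0 -> exists p q, bil p q != 0.
Proof.
case/eqP/matrixP/existsNP => k /existsNP[l]; rewrite ord1 mxE => ck0.
case/mxvec_indexP: k ck0 => i j ck0; exists (delta_mx i 0), (delta_mx j 0).
by rewrite /bil vec_outer_delta -rowE mxE; apply/eqP.
Qed.

Section KernelFamily.
Variables (a : 'cV[K]_n1) (b : 'cV[K]_n2).
Hypothesis bil_ab : bil a b != 0.
Let gam := bil a b.

Definition proj_a p := p - (bil p b / gam) *: a.
Definition proj_b q := q - (bil a q / gam) *: b.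

Lemma bil_proj_a p : bil (proj_a p) b = 0.
Proof. by rewrite bilDl -scaleNr bilZl -/gam; field. Qed.

Lemma bil_proj_b q : bil a (proj_b q) = 0.
Proof. by rewrite bilDr -scaleNr bilZr -/gam; field. Qed.

Lemma vec_outer_decomp p q :
  let t := bil (proj_a p) (proj_b q) / gam in
  let alpha := bil p b / gam in let beta := bil a q / gam in
  vec_outer p q = vec_outer (proj_a p + a) (proj_b q - t *: b)
    + (t + beta) *: vec_outer (proj_a p) b + (alpha - 1) *: vec_outer a (proj_b q)
    + (t + alpha * beta) *: vec_outer a b.
Proof.
move=> t alpha beta; apply/rowP; case/mxvec_indexP => i j.
rewrite !mxE !vec_outerE !mxE -/alpha -/beta; ring.
Qed.

(* [proj_a p] and [proj_b q] are [bil]-orthogonal to [b] and [a]; the first pair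
   is moved along [b] until it is orthogonal as well.  By [vec_outer_decomp]
   these pairs, together with [a (x) b], span the whole space. *)
Definition kernel_pairs p q : 3.-tuple ('cV[K]_n1 * 'cV[K]_n2) :=
  let t := bil (proj_a p) (proj_b q) / gam in
  [tuple (proj_a p + a, proj_b q - t *: b); (proj_a p, b); (a, proj_b q)].

Lemma bil_kernel_pairs p q k :
  bil (tnth (kernel_pairs p q) k).1 (tnth (kernel_pairs p q) k).2 = 0.
Proof.
case: k => [[|[|[|//]]] ?]; rewrite /tnth /= ?bil_proj_a ?bil_proj_b //.
by rewrite bilDl !(bilDr _ (proj_b q)) -scaleNr !bilZr bil_proj_a bil_proj_b -/gam; field.
Qed.

Definition kernel_rows :=
  rank_one_rows
    (fun x : 'I_n1 * 'I_n2 * 'I_3 =>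
       (tnth (kernel_pairs (delta_mx x.1.1 0) (delta_mx x.1.2 0)) x.2).1)
    (fun x => (tnth (kernel_pairs (delta_mx x.1.1 0) (delta_mx x.1.2 0)) x.2).2).

Lemma kernel_rows_mul0 : kernel_rows *m c = 0.
Proof.
apply/row_matrixP => l; rewrite row_mul rowK row0; apply/rowP => k.
by rewrite ord1 [RHS]mxE -[LHS]/(bil _ _) bil_kernel_pairs.
Qed.

Lemma kernel_rows_full : row_full (col_mx kernel_rows (vec_outer a b)).
Proof.
set S := col_mx _ _.
have sFS : (kernel_rows <= S)%MS by rewrite -addsmxE addsmxSl.
have sabS : (vec_outer a b <= S)%MS by rewrite -addsmxE addsmxSr.
have sker i j k : (vec_outer (tnth (kernel_pairs (delta_mx i 0) (delta_mx j 0)) k).1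
                    (tnth (kernel_pairs (delta_mx i 0) (delta_mx j 0)) k).2 <= S)%MS.
  by apply: submx_trans sFS; apply: (vec_outer_sub_rows _ _ (i, j, k)).
apply: row_full_vec_outer => i j; rewrite vec_outer_decomp.
by rewrite !addmx_sub ?scalemx_sub //;
  [apply: (sker i j 0) | apply: (sker i j 1) | apply: (sker i j 2)].
Qed.

End KernelFamily.

Lemma rank_le_flat_kernel n3 (X : tensor K n1 n2 n3) :
  c != 0 -> flat X *m c = 0 -> rank_le X (n1 * n2).-1.
Proof.
move=> c0 Xc0; have [a [b ab]] := bil_neq0 c0.
set F := kernel_rows a b; set v := vec_outer a b.
(* the projection onto the hyperplane [ker c] along [a (x) b] *)
pose P := 1%:M - (bil a b)^-1 *: (c *m v).
have P_id m (M : 'M_(m, n1 * n2)) : M *m c = 0 -> M *m P = M.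
  by move=> Mc0; rewrite mulmxBr mulmx1 -scalemxAr mulmxA Mc0 mul0mx scaler0 subr0.
have vP : v *m P = 0.
  rewrite mulmxBr mulmx1 -scalemxAr mulmxA (mx11_scalar (v *m c)) -[_ 0 0]/(bil a b).
  by rewrite mul_scalar_mx scalerA mulVf // scale1r subrr.
have sPF : (P <= F)%MS.
  have := submxMr P (etrans (sub1mx _) (kernel_rows_full a b)).
  rewrite mul1mx mul_col_mx -/v vP (P_id _ _ (kernel_rows_mul0 ab)).
  move=> /submx_trans; apply.
  by rewrite col_mx_sub submx_refl sub0mx.
have sXF : (flat X <= F)%MS by rewrite -(P_id _ _ Xc0) (submx_trans (submxMl _ _)).
exact: rank_leW (rank_le_flat_sub sXF) (mxrank_le_pred_of_mul0 c0 (kernel_rows_mul0 ab)).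
Qed.

End Hyperplane.

Section RankOnePerturbation.
Variables (m n : nat) (M : 'M[K]_(m, n)) (u : 'cV[K]_m) (v : 'rV[K]_n) (d : 'cV[K]_n).
Hypothesis Md : M *m d = u.

Lemma row_free_sub_rank_one lam :
  row_free M -> (v *m d) 0 0 = 0 -> row_free (M - lam *: (u *m v)).
Proof.
move=> /row_freeP[N MN] vd0.
have vd : v *m d = 0 by apply/matrixP => i j; rewrite !ord1 vd0 mxE.
have Md' : (M - lam *: (u *m v)) *m d = u.
  by rewrite mulmxBl Md -scalemxAl -mulmxA vd mulmx0 scaler0 subr0.
apply/row_freeP; exists (N + lam *: (d *m (v *m N))).
by rewrite mulmxDr -scalemxAr (mulmxA _ d) Md' mulmxBl MN -scalemxAl -mulmxA subrK.
Qed.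

Lemma sub_rank_one_mul0 :
  (v *m d) 0 0 != 0 -> (M - ((v *m d) 0 0)^-1 *: (u *m v)) *m d = 0.
Proof.
set g := (v *m d) 0 0 => g0.
rewrite mulmxBl Md -scalemxAl -mulmxA (mx11_scalar (v *m d)) -/g.
by rewrite mul_mx_scalar scalerA mulVf // scale1r subrr.
Qed.

End RankOnePerturbation.

End TensorRank.

Lemma pidx_subproof (i : 'I_2) (j : 'I_3) : (i + 2 * j < 6)%N.
Proof. by case: i j => [i Hi] [j Hj] /=; lia. Qed.

(* In T26 and g26 the pair (x_i, y_j) meets z_(i + 2 j), counting from 0. *)
Definition pidx (i : 'I_2) (j : 'I_3) : 'I_6 := Ordinal (pidx_subproof i j).

Lemma eq_pidx i i' j j' : (pidx i j == pidx i' j') = ((i, j) == (i', j')).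
Proof.
apply/eqP/eqP => [/(congr1 val) /= e|[-> ->]] //.
by congr (_, _); apply: val_inj => /=; move: e (ltn_ord i) (ltn_ord i'); lia.
Qed.

Section T26.
Variable K : fieldType.

Lemma T26E i j k : T26 K (i, j, k) = (k == pidx i j)%:R.
Proof.
rewrite /T26 !ffunE /ev !mxE /=.
case: i => [[|[|//]] ?]; case: j => [[|[|[|//]]] ?].
all: by case: k => [[|[|[|[|[|[|//]]]]]] ?];
  rewrite /= ?(mul1r, mulr1, mul0r, mulr0, addr0, add0r).
Qed.

Lemma flat_T26_row_free : row_free (flat (T26 K)).
Proof.
have rf : row_full (flat (T26 K)).
  apply: row_full_vec_outer => i j; rewrite vec_outer_delta.
  apply/(eq_row_sub (pidx i j))/rowP; case/mxvec_indexP => i' j'.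
  by rewrite !mxE mxvecE mxE T26E eq_pidx eq_mxvec_index eq_sym.
by rewrite /row_free (eqP rf).
Qed.

(* [flat (T26 K)] permutes coordinates by [pidx]; [dual26] is its inverse. *)
Definition dual26 (z : 'cV[K]_6) : 'cV[K]_(2 * 3) :=
  (mxvec (\matrix_(i, j) z (pidx i j) 0))^T.

Lemma flat_T26_dual z : flat (T26 K) *m dual26 z = z.
Proof.
apply/colP => k; rewrite mxE sum_mxvec_index.
under eq_bigr => i _ do under eq_bigr => j _ do rewrite flatE T26E !mxE mxvecE mxE.
rewrite !big_ord_recl !big_ord0.
by case: k => [[|[|[|[|[|[|//]]]]]] ?]; rewrite /= ?(mul1r, mul0r, addr0, add0r);
  congr (z _ 0); apply: val_inj.
Qed.

Lemma g26_dual x y z : g26 x y z = (vec_outer x y *m dual26 z) 0 0.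
Proof.
rewrite mxE sum_mxvec_index exchange_big /=.
under eq_bigr => j _ do under eq_bigr => i _ do rewrite vec_outerE !mxE mxvecE mxE.
rewrite !big_ord_recl !big_ord0 /g26 /coord1 !addr0 !addrA.
by congr (_ + _ + _ + _ + _ + _); congr (_ * _ * _); congr (_ _ 0);
  apply: val_inj; rewrite /= ?inordK.
Qed.

Lemma trank_T26 : trank (T26 K) = 6.
Proof.
apply/eqP; rewrite eqn_leq (trank_min (rank_le_dim _)).
exact: trank_ge_row_free flat_T26_row_free.
Qed.

Lemma forbidden_T26_outer a b c : forbidden (T26 K) (outer a b c) <-> g26 a b c = 0.
Proof.
rewrite /forbidden trank_T26 g26_dual; set g := _ 0 0.
have flatP lam : flat [ffun x => T26 K x - lam * outer a b c x]
    = flat (T26 K) - lam *: (c *m vec_outer a b).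
  by rewrite flat_subZ flat_outer.
split=> [forb | g0 lam]; last first.
  rewrite trank_ge_row_free // flatP (row_free_sub_rank_one (flat_T26_dual c)) //.
  exact: flat_T26_row_free.
apply/eqP/negPn/negP => gN0; have := forb g^-1; apply/negP; rewrite -ltnNge.
have d0 : dual26 c != 0 by apply: contraNneq gN0 => d0; rewrite /g d0 mulmx0 mxE.
apply: leq_ltn_trans (trank_min (rank_le_flat_kernel d0 _)) _ => //.
by rewrite flatP sub_rank_one_mul0 ?flat_T26_dual.
Qed.

End T26.

Theorem proposition6p16 (R : realType) (T : tensor R[i] 2 3 6)
  (A : 'M[R[i]]_2) (B : 'M[R[i]]_3) (C : 'M[R[i]]_6) :
  A \in unitmx -> B \in unitmx -> C \in unitmx ->
  act A B C T = T26 R[i] ->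
  forall (a : 'cV[R[i]]_2) (b : 'cV[R[i]]_3) (c : 'cV[R[i]]_6),
    outer a b c != 0 ->
    (forbidden T (outer a b c) <-> g26 (A *m a) (B *m b) (C *m c) = 0).
Proof.
move=> uA uB uC TE a b c _.
by rewrite -(forbidden_act _ _ uA uB uC) TE act_outer forbidden_T26_outer.
Qed.
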